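(* Let $G$ be a strictly pseudo-solvable group such that $3\text-5$ is an edge of $\overline\Gamma(G)$. Then (in a chief series of) $G$ there is exactly one non-solvable chief factor, and it is isomorphic to $A_5$.
   Context: For a finite group $G$, the prime graph $\Gamma(G)$ has vertex set the prime divisors of $|G|$, with distinct primes $p,q$ adjacent iff $G$ has an element of order $pq$; $\overline\Gamma(G)$ is its complement graph. A finite group is pseudo-solvable if each composition factor is cyclic or isomorphic to $A_5$; strictly pseudo-solvable means pseudo-solvable and not solvable. *)

From mathcomp Require Import all_boot all_fingroup all_solvable.
Set Implicit Arguments. Unset Strict Implicit. Unset Printing Implicit Defensive.
Local Open Scope group_scope.

Definition A5 : {set {perm 'I_5}} := 'Alt_('I_5).

(* Pseudo-solvable: for every composition series G = H_0 > H_1 > ... > H_n = 1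
   (MathComp's [comps G s], with s = [H_1; ...; H_n]), every composition
   factor H_i / H_{i+1} is cyclic or isomorphic to A5. *)
Definition pseudo_solvable (gT : finGroupType) (G : {group gT}) : Prop :=
  forall s : seq {group gT}, comps G s ->
  forall i, i < size s ->
    let H := nth G (G :: s) i in
    let K := nth 1%G s i in
    cyclic (H / K) \/ (H / K) \isog A5.

Definition strictly_pseudo_solvable (gT : finGroupType) (G : {group gT}) : Prop :=
  pseudo_solvable G /\ ~~ solvable G.

Definition prime_graph_adj (gT : finGroupType) (G : {group gT}) (p q : nat) : bool :=
  [&& p \in \pi(G), q \in \pi(G), p != q & [exists x in G, #[x] == (p * q)%N]].

Definition compl_prime_graph_adj (gT : finGroupType) (G : {group gT}) (p q : nat) : bool :=
  [&& p \in \pi(G), q \in \pi(G), p != q & ~~ prime_graph_adj G p q].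

Definition chief_series (gT : finGroupType) (G : {group gT}) (s : seq {group gT}) : bool :=
  (G.-chief).-series 1%G s && (last 1%G s == G).

(* No element of G has order 15, since 3 and 5 are not adjacent in the prime
   graph.  Let V/U be a non-solvable chief factor of G.  Then V = V'U, so for
   a maximal normal subgroup M of V containing U the simple group V/M is not
   cyclic; being a composition factor of G (as V <| G), it is A5.  If M were
   not G-invariant, a conjugate M^g would be a second such subgroup, and the
   two A5 quotients of V = M M^g would produce an element of order divisible
   by 15; hence M = U and V/U is A5.
   Given two such factors T/N below K/L, the Frattini argument writes
   K/N = (T/N) N(P) for a Sylow 5-subgroup P of T/N, so an element of order 3
   of K/L lifts to a 3-element normalizing P.  As 3 does not divide
   |Aut P| = 4, it centralizes P, and its product with a generator of P again
   has order divisible by 15.  Finally, G is not solvable, so some chief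
   factor is not. *)

From mathcomp Require Import all_boot all_fingroup all_solvable.
Set Implicit Arguments. Unset Strict Implicit. Unset Printing Implicit Defensive.
Local Open Scope group_scope.

Lemma card_A5 : #|A5| = 60.
Proof.
have lt1_I5 : 1 < #|'I_5| by rewrite card_ord.
have := card_Alt lt1_I5; rewrite card_ord -[5`!]/(2 * 60)%N.
by move/eqP; rewrite eqn_pmul2l // => /eqP.
Qed.

Section ElementOrders.

Variable gT : finGroupType.
Implicit Types G M P V : {group gT}.

Lemma exists_elt_order_dvd G x d :
  x \in G -> d %| #[x] -> exists2 y, y \in G & #[y] = d.
Proof.
move=> Gx dvd_d; exists (x ^+ (#[x] %/ d)); first exact: groupX.
by rewrite orderXdiv ?dvdn_div // divnA // mulKn ?order_gt0.
Qed.

Lemma Cauchy_coset p V M :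
  prime p -> p %| #|V / M| -> exists2 y, y \in 'N_V(M) & #[coset M y] = p.
Proof.
move=> p_pr /(Cauchy p_pr)[_ /morphimP[y Ny Vy ->] oy].
by exists y; rewrite // inE Vy.
Qed.

Lemma cent_cyclic_of_norm_pelt p P w :
  cyclic P -> ~~ (p %| totient #|P|) -> p.-elt w -> w \in 'N(P) -> w \in 'C(P).
Proof.
move=> cycP p'AutP pw nPw.
have AutPw : conj_aut P w \in Aut P.
  by rewrite (subsetP (Aut_conj_aut P 'N(P))) ?mem_morphim.
have dvd_totient : #[conj_aut P w] %| totient #|P|.
  by rewrite -card_Aut_cyclic // order_dvdG.
have [[|k] ow] := p_natP (pnat_dvd (morph_order (conj_aut P) nPw) pw).
  by rewrite -ker_conj_aut; apply/(kerP _ nPw)/eqP; rewrite -order_eq1 ow.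
by case/negP: p'AutP; rewrite (dvdn_trans _ dvd_totient) // ow expnS dvdn_mulr.
Qed.

Lemma order_mul_pelt_dvd p (a b : gT) :
  prime p -> commute a b -> p.-elt a -> a != 1 -> ~~ (p %| #[b]) ->
  p * #[b] %| #[a * b].
Proof.
move=> p_pr cab pa nta p'b.
rewrite orderM ?(pnat_coprime pa) ?p'natE // dvdn_pmul2r ?order_gt0 //.
have [[|k] oa] := p_natP pa; first by rewrite -order_eq1 oa in nta.
by rewrite oa expnS dvdn_mulr.
Qed.

End ElementOrders.

Section PseudoSolvable.

Variable gT : finGroupType.
Implicit Types G H M V : {group gT}.

Lemma maxnormal_path_to_normal G H :
  H <| G ->
  exists2 s : seq {group gT},
    path [rel x y : {group gT} | maxnormal y x x] G s & last G s = H.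
Proof.
elim: {G}#|G|.+1 {-2}G (ltnSn #|G|) => // n IHn G leGn nsHG.
have [-> | neHG] := eqVneq H G; first by exists [::].
have ltHG : (H \proper G) && (G \subset 'N(H)).
  by rewrite properEneq neHG normal_sub ?normal_norm.
have [M maxM sHM] : {M : {group gT} | maxnormal M G G & H \subset M}.
  exact: maxgroup_exists ltHG.
have ltMG : #|M| < #|G| by rewrite proper_card ?(maxnormal_proper maxM).
have nsHM : H <| M := normalS sHM (maxnormal_sub maxM) nsHG.
have [s path_s last_s] := IHn M (leq_trans ltMG leGn) nsHM.
by exists (M :: s); rewrite //= maxM.
Qed.

Lemma pseudo_solvable_normal G V : pseudo_solvable G -> V <| G -> pseudo_solvable V.
Proof.
move=> psG nsVG s /compsP[last_s path_s] i lt_i.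
have [s1 path_s1 last_s1] := maxnormal_path_to_normal nsVG.
have comps_Gs : comps G (s1 ++ s).
  by apply/compsP; rewrite last_cat cat_path path_s1 last_s1.
have := psG _ comps_Gs (size s1 + i); rewrite size_cat ltn_add2l => /(_ lt_i) /=.
rewrite -cat_cons lastI cat_rcons !nth_cat size_belast !ltnNge !leq_addr /= !addKn.
by rewrite last_s1 (@set_nth_default _ (V :: s) V G i (leqW lt_i)).
Qed.

Lemma pseudo_solvable_maxnormal V M :
  pseudo_solvable V -> maxnormal M V V -> cyclic (V / M) \/ V / M \isog A5.
Proof.
move=> psV maxM; have [s /compsP[last_s path_s]] := exists_comps M.
have comps_Ms : comps V (M :: s) by apply/compsP; rewrite /= maxM.
exact: psV comps_Ms 0 isT.
Qed.

End PseudoSolvable.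

Section MaxnormalSubgroups.

Variable gT : finGroupType.
Implicit Types G M N U V X : {group gT}.

Lemma maxnormalJ M V g : maxnormal M V V -> g \in 'N(V) -> maxnormal (M :^ g) V V.
Proof.
move=> maxM /normP nVg; have sMV := maxnormal_sub maxM.
have conjE (H : {group gT}) : H \subset V -> conjgm V g @* H = H :^ g.
  by move=> sHV; rewrite morphim_conj (setIidPr sHV).
by rewrite -nVg -!conjE // injm_maxnormal ?injm_conj.
Qed.

Lemma coset_mulg_lift M N V y z :
  M * N = V -> y \in V -> z \in V ->
  exists2 x, x \in V & coset M x = coset M y /\ coset N x = coset N z.
Proof.
move=> defV; rewrite -{1 2}defV => /mulsgP[m a Mm Na ->] /mulsgP[b n Mb Nn ->].
have [sMV sNV] : M \subset V /\ N \subset V.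
  by rewrite -defV; split; [apply: mulG_subl | apply: mulG_subr].
exists (a * b); first exact: groupM (subsetP sNV a Na) (subsetP sMV b Mb).
by rewrite (coset_kerr a Mb) (coset_kerl a Mm) (coset_kerl b Na) (coset_kerr b Nn).
Qed.

Lemma pq_elt_of_mulg p q M N V :
  prime p -> prime q -> p != q -> M * N = V ->
  V \subset 'N(M) -> V \subset 'N(N) -> p %| #|V / M| -> q %| #|V / N| ->
  exists2 x, x \in V & p * q %| #[x].
Proof.
move=> p_pr q_pr neq_pq defV nMV nNV pVM qVN.
have [y /setIP[Vy _] oy] := Cauchy_coset p_pr pVM.
have [z /setIP[Vz _] oz] := Cauchy_coset q_pr qVN.
have [x Vx [yMx zNx]] := coset_mulg_lift defV Vy Vz.
exists x => //; rewrite Gauss_dvd; last by rewrite prime_coprime // dvdn_prime2.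
apply/andP; split; [rewrite -oy -yMx | rewrite -oz -zNx].
  exact: morph_order (subsetP nMV x Vx).
exact: morph_order (subsetP nNV x Vx).
Qed.

Lemma chief_factor_nonabelian_quotient G U V X :
  maxnormal U V G -> V <| G -> ~~ abelian (V / U) ->
  U \subset X -> X \proper V -> V \subset 'N(X) -> ~~ abelian (V / X).
Proof.
move=> maxU nsVG nabU sUX ltXV nXV; apply: contra nabU => abX.
have /andP[_ nUG] := maxgroupp maxU.
have nV'G : G \subset 'N(V^`(1)).
  exact: char_norm_trans (der_char 1 V) (normal_norm nsVG).
have ltV'U_V : ((V^`(1) <*> U)%G \proper V) && (G \subset 'N(V^`(1) <*> U)).
  by rewrite normsY // andbT (sub_proper_trans _ ltXV) // join_subG der1_min.
apply: sub_der1_abelian.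
by rewrite -((maxgroupP maxU).2 _ ltV'U_V (joing_subr _ _)) joing_subl.
Qed.

End MaxnormalSubgroups.

Section ChiefFactorA5.

Variables (gT : finGroupType) (G : {group gT}).
Implicit Types U V X : {group gT}.
Hypothesis psG : pseudo_solvable G.
Hypothesis no_elt15 : {in G, forall x, ~~ (3 * 5 %| #[x])}.

Lemma chief_factor_isog_A5 U V :
  maxnormal U V G -> V <| G -> ~~ solvable (V / U) -> V / U \isog A5.
Proof.
move=> maxU nsVG nsolVU; have sVG := normal_sub nsVG.
have nabVU : ~~ abelian (V / U) by apply: contra nsolVU; apply: abelian_sol.
have /andP[ltUV nUG] := maxgroupp maxU.
have A5_over X : maxnormal X V V -> U \subset X -> V / X \isog A5.
  move=> maxX sUX; have /andP[ltXV nXV] := maxgroupp maxX.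
  have psV := pseudo_solvable_normal psG nsVG.
  have := chief_factor_nonabelian_quotient maxU nsVG nabVU sUX ltXV nXV.
  by case: (pseudo_solvable_maxnormal psV maxX) => // /cyclic_abelian ->.
have [M maxM sUM] : {M : {group gT} | maxnormal M V V & U \subset M}.
  by apply: maxgroup_exists; rewrite ltUV (subset_trans sVG nUG).
have [<- // | neMU] := eqVneq M U; first exact: A5_over.
have [g Gg neMgM] : exists2 g, g \in G & M :^ g != M.
  have: ~~ (G \subset 'N(M)).
    apply: contra neMU => nMG; apply/eqP/val_inj/(maxgroupP maxU).2 => //.
    by rewrite (maxnormal_proper maxM).
  by case/subsetPn=> g Gg nMg; exists g; last by apply: contraNneq nMg => /normP.
have maxMg : maxnormal (M :^ g) V V.
  by apply: maxnormalJ; rewrite ?(subsetP (normal_norm nsVG)).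
have sUMg : U \subset M :^ g by rewrite -(normP (subsetP nUG g Gg)) conjSg.
have defV : M * (M :^ g) = V by apply: maxnormalM => //; apply/eqP; rewrite eq_sym.
have nMV := normal_norm (maxnormal_normal maxM).
have nMgV := normal_norm (maxnormal_normal maxMg).
have dvd_60 X d : maxnormal X V V -> U \subset X -> d %| 60 -> d %| #|V / X|.
  by move=> maxX sUX; rewrite (card_isog (A5_over X maxX sUX)) card_A5.
have [x Vx dvd_x] := pq_elt_of_mulg (isT : prime 3) (isT : prime 5) isT defV
  nMV nMgV (dvd_60 _ 3 maxM sUM isT) (dvd_60 _ 5 maxMg sUMg isT).
by case/negP: (no_elt15 (subsetP sVG x Vx)).
Qed.

End ChiefFactorA5.

Section TwoFactors.

Variable gT : finGroupType.
Implicit Types N T L K : {group gT}.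

Lemma Frattini_coset_lift q N T L K (P : {group coset_of N}) y :
  T <| K -> K \subset 'N(N) -> N \subset T -> T \subset L -> q.-Sylow(T / N) P ->
  y \in K -> exists2 z, z \in K & coset N z \in 'N(P) /\ coset L z = coset L y.
Proof.
move=> nsTK nNK sNT sTL sylP Ky.
have sTK := normal_sub nsTK; have inNN := subsetP nNK.
have : coset N y \in K / N by rewrite mem_quotient.
rewrite -(Frattini_arg (quotient_normal N nsTK) sylP).
case/mulsgP=> _ _ /morphimP[t _ Tt ->] /setIP[/morphimP[z _ Kz ->] nPz] defy.
exists z => //; split => //.
have Kt := subsetP sTK t Tt.
have Ny_tz : y * (t * z)^-1 \in N.
  apply: coset_idr; first by rewrite inNN // !(groupM, groupV).
  by rewrite !(morphM, morphV) ?inNN ?(groupM, groupV) // -defy mulgV.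
have sNL := subset_trans sNT sTL.
rewrite -(mulgKV (t * z) y) (coset_kerl _ (subsetP sNL _ Ny_tz)).
by rewrite (coset_kerl _ (subsetP sTL _ Tt)).
Qed.

Lemma pq_elt_of_factors p q N T L K :
  prime p -> prime q -> p != q -> ~~ (p %| q.-1) ->
  T <| K -> K \subset 'N(N) -> K \subset 'N(L) -> N \subset T -> T \subset L ->
  (#|T / N|`_q)%N = q -> p %| #|K / L| ->
  exists2 x, x \in K & p * q %| #[x].
Proof.
move=> p_pr q_pr neq_pq p'q1 nsTK nNK nLK sNT sTL Tq Kp.
have [inNN inNL] := (subsetP nNK, subsetP nLK).
have [P sylP] := Sylow_exists q (T / N).
have oP : #|P| = q by rewrite (card_Hall sylP).
have [y /setIP[Ky _] oy] := Cauchy_coset p_pr Kp.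
have [z Kz [nPz zLy]] := Frattini_coset_lift nsTK nNK sNT sTL sylP Ky.
pose w := z.`_p.
have Kw : w \in K by rewrite (subsetP _ _ (cycle_constt p z)) ?cycle_subG.
have wLy : coset L w = coset L y.
  by rewrite morph_constt ?inNL //= zLy constt_p_elt // /p_elt oy pnat_id.
have wN_pelt : p.-elt (coset N w) by rewrite morph_constt ?inNN // p_elt_constt.
have ntwN : coset N w != 1.
  apply: contraTneq (prime_gt1 p_pr) => /(coset_idr (inNN w Kw)) Nw.
  by rewrite -oy -wLy coset_id ?order1 // (subsetP (subset_trans sNT sTL)).
have cycP : cyclic P by rewrite prime_cyclic ?oP.
have cPwN : coset N w \in 'C(P).
  apply: (cent_cyclic_of_norm_pelt cycP _ wN_pelt).
    by rewrite oP totient_prime.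
  by rewrite morph_constt ?inNN // (subsetP _ _ (cycle_constt p _)) ?cycle_subG.
have [t defP] := cyclicP cycP; have ot : #[t] = q by rewrite -oP defP.
have Pt : t \in P by rewrite defP cycle_id.
have /morphimP[t1 _ Tt1 deft] : t \in T / N by rewrite (subsetP (pHall_sub sylP)).
have Kt1 : t1 \in K := subsetP (normal_sub nsTK) t1 Tt1.
exists (w * t1); first exact: groupM.
apply: dvdn_trans (morph_order (coset_morphism N) (inNN _ (groupM Kw Kt1))).
rewrite morphM ?inNN //= -deft -ot.
apply: order_mul_pelt_dvd => //; first exact: (centP cPwN) t Pt.
by rewrite ot dvdn_prime2.
Qed.

End TwoFactors.

Lemma series_solvable (gT : finGroupType) (H : {group gT}) (s : seq {group gT}) :
  solvable H -> path [rel A B : {group gT} | (A <| B) && solvable (B / A)] H s ->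
  solvable (last H s).
Proof.
elim: s H => //= B s IHs H solH /andP[/andP[nsHB solBH] path_s].
by apply: IHs path_s; rewrite (series_sol nsHB) solH.
Qed.

Section ChiefSeries.

Variables (gT : finGroupType) (G : {group gT}) (s : seq {group gT}).
Hypothesis chief_s : (G.-chief).-series 1%G s.
Local Notation A k := (nth 1%G (1%G :: s) k).

Lemma chief_series_factor j : j < size s -> chief_factor G (A j) (A j.+1).
Proof. exact: (pathP 1%G chief_s). Qed.

Lemma chief_series_normal j : j <= size s -> A j <| G.
Proof.
case: j => [|j] lt_j; first exact: normal1.
by case/andP: (chief_series_factor lt_j).
Qed.

Lemma chief_series_mono i j : i <= j -> j <= size s -> A i \subset A j.
Proof.
move=> le_ij le_js.
pose sub_rel := [rel B C : {group gT} | B \subset C].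
have sorted_s : sorted sub_rel (1%G :: s).
  by apply: sub_path chief_s => B C /andP[/maxnormal_sub].
have sub_trans : transitive sub_rel by move=> B C D /subset_trans; apply.
have sub_refl : reflexive sub_rel by move=> B; apply: subxx.
apply: (sorted_leq_nth sub_trans sub_refl 1%G sorted_s) => //.
exact: leq_trans le_ij le_js.
Qed.

Lemma chief_series_solvable :
  (forall j, j < size s -> solvable (A j.+1 / A j)) -> solvable (last 1%G s).
Proof.
move=> sol_factors; apply: series_solvable (solvable1 _) _.
apply/(pathP 1%G) => j lt_j; rewrite /= sol_factors // andbT.
have /andP[maxA /andP[sAG _]] := chief_series_factor lt_j.
have /andP[/proper_sub sAA nAG] := maxgroupp maxA.
by rewrite /normal sAA (subset_trans sAG nAG).
Qed.

Lemma chief_series_A5_pair i j :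
  i < j -> j < size s -> A i.+1 / A i \isog A5 -> A j.+1 / A j \isog A5 ->
  exists2 x, x \in G & 3 * 5 %| #[x].
Proof.
move=> lt_ij lt_js isoI isoJ; have lt_is := ltn_trans lt_ij lt_js.
have sKG := normal_sub (chief_series_normal lt_js).
have norm_K k : k <= size s -> A j.+1 \subset 'N(A k).
  by move=> le_ks; rewrite (subset_trans sKG) ?normal_norm ?chief_series_normal.
have T5 : (#|A i.+1 / A i|`_5)%N = 5 by rewrite (card_isog isoI) card_A5 p_part.
have K3 : 3 %| #|A j.+1 / A j| by rewrite (card_isog isoJ) card_A5.
have [x Kx dvd_x] := pq_elt_of_factors (isT : prime 3) (isT : prime 5) isT isT
  (normalS (@chief_series_mono i.+1 j.+1 (ltnW lt_ij) lt_js) sKG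
     (chief_series_normal lt_is))
  (norm_K i (ltnW lt_is)) (norm_K j (ltnW lt_js))
  (chief_series_mono (leqnSn i) lt_is) (chief_series_mono lt_ij (ltnW lt_js)) T5 K3.
by exists x; first exact: subsetP sKG x Kx.
Qed.

End ChiefSeries.

Theorem mainTheorem8 (gT : finGroupType) (G : {group gT}) :
  strictly_pseudo_solvable G ->
  compl_prime_graph_adj G 3 5 ->
  forall s : seq {group gT}, chief_series G s ->
  exists i, [/\ i < size s,
     ~~ solvable (nth 1%G s i / nth 1%G (1%G :: s) i),
     (nth 1%G s i / nth 1%G (1%G :: s) i) \isog A5
   & forall j, j < size s ->
       ~~ solvable (nth 1%G s j / nth 1%G (1%G :: s) j) -> j = i].
Proof.
move=> [psG nsolG] /and4P[pi3 pi5 _ not_adj] s /andP[chief_s /eqP last_s].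
pose F j := nth 1%G s j / nth 1%G (1%G :: s) j.
have no_elt15 : {in G, forall x, ~~ (3 * 5 %| #[x])}.
  move=> x Gx; apply: contra not_adj => /(exists_elt_order_dvd Gx)[y Gy oy].
  by rewrite /prime_graph_adj pi3 pi5; apply/existsP; exists y; rewrite Gy oy eqxx.
have A5_factor j : j < size s -> ~~ solvable (F j) -> F j \isog A5.
  move=> lt_js; case/andP: (chief_series_factor chief_s lt_js) => maxj nsjG.
  exact (chief_factor_isog_A5 psG no_elt15 maxj nsjG).
have no_two k l :
    k < l -> l < size s -> ~~ solvable (F k) -> ~~ solvable (F l) -> False.
  move=> lt_kl lt_ls nsol_k nsol_l; have lt_ks := ltn_trans lt_kl lt_ls.
  have [x Gx] := chief_series_A5_pair chief_s lt_kl lt_ls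
    (A5_factor k lt_ks nsol_k) (A5_factor l lt_ls nsol_l).
  exact/negP/no_elt15.
have [i lt_is nsol_i] : exists2 i, i < size s & ~~ solvable (F i).
  suff /existsP[[i lt_is] /= nsol_i] : [exists i : 'I_(size s), ~~ solvable (F i)].
    by exists i.
  apply: contraR nsolG => /existsPn sol_F; rewrite -last_s.
  apply: chief_series_solvable chief_s _ => j lt_js.
  exact: negbNE (sol_F (Ordinal lt_js)).
exists i; split => // [|j lt_js nsol_j]; first exact: A5_factor.
by case: (ltngtP i j) => // [lt_ij | lt_ji];
  [case: (no_two i j) | case: (no_two j i)].
Qed.
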